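(* For every $t_1,\dots,t_k\in S$ and $a_i\in\Gamma(t_i)$: (a) $p^{t_1,\dots,t_k}_{a_1,\dots,a_k}\mathcal H_\pi\subset\mathcal H_\pi$ and $p^{t_1,\dots,t_k}_{a_1,\dots,a_k}\mathcal H_\pi^\perp\subset\mathcal H_\pi^\perp$; (b) $p^{t_1,\dots,t_k}_{a_1,\dots,a_k}$ commutes with $p_\pi$; (c) the restriction of $p^{t_1,\dots,t_k}_{a_1,\dots,a_k}$ to $\mathcal H_\pi$ is the projection in $\mathcal H_\pi$ onto the subspace $\mathcal H^{t_1,\dots,t_k}_{a_1,\dots,a_k}\cap\mathcal H_\pi$; (d) for every $\phi\in\mathcal H_\pi$, $p^{t_1,\dots,t_k}_{a_1,\dots,a_k}\phi=p^{t_1}_{a_1}\cdots p^{t_k}_{a_k}\phi$; (e) for every $\phi\in\mathcal H_\pi$ and every $i\in\{1,\dots,k\}$, $$\sum_{a_i\in\Gamma(t_i)}p^{t_1,\dots,t_{i-1},t_i,t_{i+1},\dots,t_k}_{a_1,\dots,a_{i-1},a_i,a_{i+1},\dots,a_k}\phi=p^{t_1,\dots,t_{i-1},t_{i+1},\dots,t_k}_{a_1,\dots,a_{i-1},a_{i+1},\dots,a_k}\phi .$$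
   Context: Let $\mathcal H$ be a complex Hilbert space. A projection is a bounded self-adjoint idempotent operator; $\wedge_\alpha p_\alpha$ is the projection onto the intersection of ranges of the $p_\alpha$. Sums of countably many operators are understood strongly. Let $S$ be a set; for each $t\in S$ let $\Gamma(t)$ be a countable set and for $a\in\Gamma(t)$ let $p^t_a$ be a projection on $\mathcal H$ with range $\mathcal H^t_a$ and $\sum_{a\in\Gamma(t)}p^t_a=I$. Let $\pi=\{p^t_a\}$, $\mathcal H^{t_1,\dots,t_k}_{a_1,\dots,a_k}=\bigcap_i\mathcal H^{t_i}_{a_i}$ and $p^{t_1,\dots,t_k}_{a_1,\dots,a_k}=\wedge_{i=1}^kp^{t_i}_{a_i}$ its projection. $\pi$ commutes on $\phi$ if $W\phi=V\phi$ whenever $W,V$ are finite products of elements of $\pi$ with the same factors (with multiplicity) in possibly different orders; $\mathcal H_\pi$ is the closed subspace of such $\phi$ and $p_\pi$ the projection onto it. *)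

From Stdlib Require Import ClassicalEpsilon List Permutation.
From mathcomp Require Import all_boot all_algebra.
From mathcomp Require Import reals complex.
Import GRing.Theory Num.Theory.
Set Implicit Arguments. Unset Strict Implicit. Unset Printing Implicit Defensive.
Local Open Scope ring_scope.

Section Hilbert.
Variables (R : realType) (H : lmodType R[i]) (ip : H -> H -> R[i]).

Definition hnorm (x : H) : R[i] := sqrtC (ip x x).

Definition is_inner_product : Prop :=
  [/\ forall (c : R[i]) (x y z : H), ip (c *: x + y) z = c * ip x z + ip y z,
      forall x y : H, ip y x = (ip x y)^*,
      forall x : H, 0 <= ip x x
    & forall x : H, ip x x = 0 -> x = 0].

Definition cauchy_seq (u : nat -> H) : Prop :=
  forall e : R[i], 0 < e -> exists N : nat, forall n m : nat,
    (N <= n)%N -> (N <= m)%N -> hnorm (u n - u m) < e.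

Definition converges_to (u : nat -> H) (l : H) : Prop :=
  forall e : R[i], 0 < e -> exists N : nat, forall n : nat,
    (N <= n)%N -> hnorm (u n - l) < e.

Definition is_hilbert : Prop :=
  is_inner_product /\ forall u, cauchy_seq u -> exists l, converges_to u l.

(* unconditional (strong) convergence of a sum indexed by a countable set *)
Definition has_sum (I : countType) (f : I -> H) (x : H) : Prop :=
  forall e : R[i], 0 < e -> exists s0 : seq I, forall s : seq I,
    uniq s -> {subset s0 <= s} -> hnorm (\sum_(a <- s) f a - x) < e.

Definition bounded_linear (f : H -> H) : Prop :=
  (forall (c : R[i]) (x y : H), f (c *: x + y) = c *: f x + f y) /\
  exists M : R[i], forall x, hnorm (f x) <= M * hnorm x.

Definition is_projection (p : H -> H) : Prop :=
  [/\ bounded_linear p,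
      forall x y, ip (p x) y = ip x (p y)
    & forall x, p (p x) = p x].

Definition range (p : H -> H) (y : H) : Prop := exists x, p x = y.

Definition proj_onto (M : H -> Prop) : H -> H :=
  epsilon (inhabits id)
    (fun q => is_projection q /\ forall y, M y <-> range q y).

Definition meetp (ps : list (H -> H)) : H -> H :=
  proj_onto (fun y => forall q, In q ps -> range q y).

Definition orth (M : H -> Prop) (y : H) : Prop := forall x, M x -> ip y x = 0.

Definition prodop (ws : list (H -> H)) : H -> H := foldr (fun f g => f \o g) id ws.

Definition proj_in (D K : H -> Prop) (f : H -> H) : Prop :=
  [/\ forall x, D x -> D (f x),
      forall x y, D x -> D y -> ip (f x) y = ip x (f y),
      forall x, D x -> f (f x) = f x
    & forall y, K y <-> exists x, D x /\ f x = y].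

Section Family.
Variables (S : Type) (Gamma : S -> countType) (p : forall t, Gamma t -> H -> H).

Definition in_pi (w : H -> H) : Prop := exists t (a : Gamma t), w = p a.

Definition commutes_on (phi : H) : Prop :=
  forall ws vs : list (H -> H), (forall w, In w ws -> in_pi w) ->
    Permutation ws vs -> prodop ws phi = prodop vs phi.

Definition Hpi (phi : H) : Prop := commutes_on phi.

Definition ppi : H -> H := proj_onto Hpi.

(* p^{t_1..t_k}_{a_1..a_k} for ts = [(t_1,a_1);...;(t_k,a_k)] *)
Definition ops (ts : list {t : S & Gamma t}) : list (H -> H) :=
  map (fun x => p (projT2 x)) ts.

Definition pmeet (ts : list {t : S & Gamma t}) : H -> H := meetp (ops ts).

Definition Hmeet (ts : list {t : S & Gamma t}) (y : H) : Prop :=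
  forall q, In q (ops ts) -> range q y.

End Family.
End Hilbert.

From Stdlib Require Import ClassicalEpsilon List Permutation.
From mathcomp Require Import all_boot all_order all_algebra.
From mathcomp Require Import reals complex ring lra.
Import Order.TTheory GRing.Theory Num.Theory.
Set Implicit Arguments. Unset Strict Implicit. Unset Printing Implicit Defensive.
Local Open Scope ring_scope.

(* Everything rests on (d). For phi in H_pi the product p^{t_1}_{a_1} ...
   p^{t_k}_{a_k} phi lies in every range H^{t_i}_{a_i}, since commutation on
   phi lets the factor p^{t_i}_{a_i} be moved to the front; and phi minus
   this product is orthogonal to the intersection of the ranges, because the
   self-adjoint factors fix its elements. So the product is the orthogonal
   projection of phi onto that intersection. Products of elements of pi map
   H_pi into itself, hence so does the meet projection, and (a)-(c) hold for
   any projection leaving a closed subspace invariant; (e) is (d) combined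
   with sum_a p^t_a = I. Orthogonal projections onto closed subspaces are
   built via nearest points: a minimizing sequence is Cauchy by the
   parallelogram law, and the error of the nearest point is orthogonal to the
   subspace. *)

Section InnerProduct.
Variables (R : realType) (H : lmodType R[i]) (ip : H -> H -> R[i]).
Hypothesis hip : is_inner_product ip.

Lemma ipDZl c x y z : ip (c *: x + y) z = c * ip x z + ip y z.
Proof. by case: hip. Qed.

Lemma ipC x y : ip y x = (ip x y)^*.
Proof. by case: hip. Qed.

Lemma ip_ge0 x : 0 <= ip x x.
Proof. by case: hip. Qed.

Lemma ip_eq0 x : ip x x = 0 -> x = 0.
Proof. by case: hip => _ _ _; apply. Qed.

Lemma ip0l z : ip 0 z = 0.
Proof.
have := ipDZl 1 0 0 z; rewrite scale1r !addr0 mul1r => h.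
by apply: (@addrI _ (ip 0 z)); rewrite addr0 -h.
Qed.

Lemma ipDl x y z : ip (x + y) z = ip x z + ip y z.
Proof. by rewrite -[x]scale1r ipDZl mul1r scale1r. Qed.

Lemma ipZl c x z : ip (c *: x) z = c * ip x z.
Proof. by rewrite -[c *: x]addr0 ipDZl ip0l addr0. Qed.

Lemma ipNl x z : ip (- x) z = - ip x z.
Proof. by rewrite -scaleN1r ipZl mulN1r. Qed.

Lemma ipBl x y z : ip (x - y) z = ip x z - ip y z.
Proof. by rewrite ipDl ipNl. Qed.

Lemma ip0r z : ip z 0 = 0.
Proof. by rewrite ipC ip0l conjC0. Qed.

Lemma ipDr x y z : ip z (x + y) = ip z x + ip z y.
Proof. by rewrite ipC ipDl rmorphD (ipC x z) (ipC y z). Qed.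

Lemma ipZr c x z : ip z (c *: x) = c^* * ip z x.
Proof. by rewrite ipC ipZl rmorphM (ipC x z). Qed.

Lemma ipNr x z : ip z (- x) = - ip z x.
Proof. by rewrite ipC ipNl rmorphN (ipC x z). Qed.

Definition reip x y : R := complex.Re (ip x y).
Definition sqnorm x : R := complex.Re (ip x x).
Definition rnorm x : R := Num.sqrt (sqnorm x).

Lemma ipxxE x : ip x x = (sqnorm x)%:C%C.
Proof.
by rewrite /sqnorm; have := ip_ge0 x; case: (ip x x) => a b /= /ger0_Im /= ->.
Qed.

Lemma sqnorm_ge0 x : 0 <= sqnorm x.
Proof. by have := ip_ge0 x; rewrite ipxxE ler0c. Qed.

Lemma sqnorm_eq0 x : sqnorm x = 0 -> x = 0.
Proof. by move=> h; apply: ip_eq0; rewrite ipxxE h. Qed.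

Lemma reipC x y : reip y x = reip x y.
Proof. by rewrite /reip ipC; case: (ip x y). Qed.

Lemma sqnormDZ a b (t : R) :
  sqnorm (a + t%:C%C *: b) = sqnorm a + 2 * t * reip a b + t ^+ 2 * sqnorm b.
Proof.
have tJ : (t%:C%C)^* = t%:C%C := conjc_real t.
rewrite /sqnorm /reip ipDl !ipDr !ipZl !ipZr tJ (ipC a b).
case: (ip a a) (ip a b) (ip b b) => [? ?] [? ?] [? ?] /=; ring.
Qed.

Lemma sqnorm0 : sqnorm 0 = 0.
Proof. by rewrite /sqnorm ip0l. Qed.

Lemma sqnormN x : sqnorm (- x) = sqnorm x.
Proof. by rewrite /sqnorm ipNl ipNr opprK. Qed.

Lemma parallelogram a b :
  sqnorm (a + b) + sqnorm (a - b) = 2 * sqnorm a + 2 * sqnorm b.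
Proof.
have := sqnormDZ a b 1; have := sqnormDZ a b (-1).
by rewrite rmorphN1 scaleN1r rmorph1 scale1r; lra.
Qed.

Lemma pythagoras a b : reip a b = 0 -> sqnorm (a + b) = sqnorm a + sqnorm b.
Proof. by move=> hab; have := sqnormDZ a b 1; rewrite rmorph1 scale1r hab; lra. Qed.

Lemma rnorm_ge0 x : 0 <= rnorm x.
Proof. exact: sqrtr_ge0. Qed.

Lemma rnorm_sqr x : rnorm x ^+ 2 = sqnorm x.
Proof. by rewrite sqr_sqrtr // sqnorm_ge0. Qed.

Lemma rnorm_eq0 x : rnorm x = 0 -> x = 0.
Proof. by move=> h; apply: sqnorm_eq0; rewrite -rnorm_sqr h expr0n. Qed.

Lemma rnormB x y : rnorm (x - y) = rnorm (y - x).
Proof. by rewrite /rnorm -sqnormN opprB. Qed.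

Lemma hnormE x : hnorm ip x = (rnorm x)%:C%C.
Proof. by rewrite /hnorm ipxxE -rnorm_sqr rmorphXn sqrCK // ler0c rnorm_ge0. Qed.

Lemma cauchy_schwarz a b : reip a b <= rnorm a * rnorm b.
Proof.
have [b0|b_neq0] := eqVneq (sqnorm b) 0.
  by rewrite (sqnorm_eq0 b0) /reip ip0r mulr_ge0 ?rnorm_ge0.
have b_gt0 : 0 < sqnorm b by rewrite lt0r b_neq0 sqnorm_ge0.
have discr : reip a b ^+ 2 <= sqnorm a * sqnorm b.
  (* [sqnorm (a + t b)] is nonnegative at its minimum [t = - reip a b / sqnorm b] *)
  pose t := - reip a b / sqnorm b.
  have := mulr_ge0 (sqnorm_ge0 (a + t%:C%C *: b)) (ltW b_gt0); rewrite sqnormDZ.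
  have -> : (sqnorm a + 2 * t * reip a b + t ^+ 2 * sqnorm b) * sqnorm b =
      sqnorm a * sqnorm b - reip a b ^+ 2 by rewrite /t; field; exact: lt0r_neq0.
  by rewrite subr_ge0.
apply: le_trans (ler_norm _) _; rewrite -sqrtr_sqr /rnorm -sqrtrM ?sqnorm_ge0 //.
by rewrite ler_sqrt // mulr_ge0 ?sqnorm_ge0.
Qed.

Lemma rnormD a b : rnorm (a + b) <= rnorm a + rnorm b.
Proof.
rewrite -ler_sqr ?nnegrE ?addr_ge0 ?rnorm_ge0 // sqrrD !rnorm_sqr.
have := sqnormDZ a b 1; rewrite rmorph1 scale1r => ->.
by have := cauchy_schwarz a b; lra.
Qed.

Lemma rnorm_split x y z : rnorm (x - z) <= rnorm (x - y) + rnorm (y - z).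
Proof. by have := rnormD (x - y) (y - z); rewrite addrA subrK. Qed.


Lemma rnorm_le x y : (rnorm x <= rnorm y) = (sqnorm x <= sqnorm y).
Proof. exact/ler_sqrt/sqnorm_ge0. Qed.

Lemma rnorm_lt x (e : R) : 0 < e -> (rnorm x < e) = (sqnorm x < e ^+ 2).
Proof.
by move=> e_gt0; rewrite -[e in LHS]gtr0_norm // -sqrtr_sqr ltr_sqrt ?exprn_gt0.
Qed.

Definition convergesR (u : nat -> H) l := forall e : R, 0 < e ->
  exists N, forall n, (N <= n)%N -> rnorm (u n - l) < e.

Definition cauchyR (u : nat -> H) := forall e : R, 0 < e ->
  exists N, forall n m, (N <= n)%N -> (N <= m)%N -> rnorm (u n - u m) < e.

Lemma convergesR_unique u a b : convergesR u a -> convergesR u b -> a = b.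
Proof.
move=> ua ub; apply/subr0_eq/rnorm_eq0/eqP; rewrite eq_le rnorm_ge0 andbT.
apply/ler_addgt0Pr => e e_gt0; rewrite add0r.
have [|Na hNa] := ua (e / 2); first by rewrite divr_gt0.
have [|Nb hNb] := ub (e / 2); first by rewrite divr_gt0.
have := hNa _ (leq_maxl Na Nb); have := hNb _ (leq_maxr Na Nb).
have := rnorm_split a (u (maxn Na Nb)) b; rewrite (rnormB a (u _)); lra.
Qed.

Lemma invSn_lt (e : R) : 0 < e -> exists N, forall n, (N <= n)%N -> n.+1%:R^-1 < e.
Proof.
move=> e_gt0; exists (Num.trunc e^-1) => n le_Nn.
rewrite -[e]invrK ltf_pV2 ?posrE ?invr_gt0 ?ltr0Sn //.
by apply: lt_le_trans (truncnS_gt _) _; rewrite ler_nat ltnS.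
Qed.

Definition nonexpansive (f : H -> H) := linear f /\ forall x, rnorm (f x) <= rnorm x.

Lemma nonexpansive_id : nonexpansive id.
Proof. by split=> // x. Qed.

Lemma linB (f : H -> H) : linear f -> forall x y, f (x - y) = f x - f y.
Proof.
by move=> f_lin x y; rewrite addrC -scaleN1r (f_lin (-1) y x) scaleN1r addrC.
Qed.

Lemma lin0 (f : H -> H) : linear f -> f 0 = 0.
Proof. by move=> f_lin; rewrite -[X in f X](subrr 0) linB // subrr. Qed.

Lemma convergesR_nonexpansive f u l :
  nonexpansive f -> convergesR u l -> convergesR (fun n => f (u n)) (f l).
Proof.
move=> [f_lin f_le] ul e e_gt0; have [N hN] := ul e e_gt0; exists N => n le_Nn.
by rewrite -linB //; apply: le_lt_trans (f_le _) (hN _ le_Nn).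
Qed.

Section Projection.
Variable q : H -> H.
Hypothesis hq : is_projection ip q.

Lemma proj_linear : linear q.
Proof. by case: hq => [[]]. Qed.

Lemma proj_selfadj x y : ip (q x) y = ip x (q y).
Proof. by case: hq. Qed.

Lemma proj_idem x : q (q x) = q x.
Proof. by case: hq. Qed.

Lemma proj_rangeE y : range q y <-> q y = y.
Proof. by split=> [[x <-]|qy]; [exact: proj_idem | exists y]. Qed.

Lemma proj_reip_orth x : reip (q x) (x - q x) = 0.
Proof.
by rewrite /reip proj_selfadj (linB proj_linear) proj_idem subrr ip0r.
Qed.

Lemma proj_nonexpansive : nonexpansive q.
Proof.
split=> [|x]; first exact: proj_linear.
rewrite rnorm_le -{2}(addrNK (q x) x) pythagoras.
  by rewrite lerDr sqnorm_ge0.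
by rewrite reipC proj_reip_orth.
Qed.

End Projection.

Lemma prodop_nonexpansive ws : (forall w, In w ws -> is_projection ip w) ->
  nonexpansive (prodop ws).
Proof.
elim: ws => [|w ws IH] ws_proj /=; first exact: nonexpansive_id.
have [w_lin w_le] := proj_nonexpansive (ws_proj w (or_introl erefl)).
have [lin le] := IH (fun v v_in => ws_proj v (or_intror v_in)).
by split=> [c x y|x] /=; [rewrite lin w_lin | apply: le_trans (w_le _) (le _)].
Qed.

Definition subspace (M : H -> Prop) :=
  M 0 /\ forall c x y, M x -> M y -> M (c *: x + y).

Definition closed_subspace (M : H -> Prop) :=
  subspace M /\ forall u l, (forall n, M (u n)) -> convergesR u l -> M l.

Lemma subspaceD M x y : subspace M -> M x -> M y -> M (x + y).
Proof. by case=> _ MD Mx My; rewrite -[x]scale1r; apply: MD. Qed.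

Lemma subspaceZ M c x : subspace M -> M x -> M (c *: x).
Proof. by case=> M0 MD Mx; rewrite -[_ *: _]addr0; apply: MD. Qed.

Lemma subspaceB M x y : subspace M -> M x -> M y -> M (x - y).
Proof. by move=> M_sub Mx My; rewrite -scaleN1r addrC; apply: M_sub.2. Qed.

Lemma equalizer_closed_subspace f g : nonexpansive f -> nonexpansive g ->
  closed_subspace (fun x => f x = g x).
Proof.
move=> f_ne g_ne; have [f_lin _] := f_ne; have [g_lin _] := g_ne.
split; first split=> [|c x y fg_x fg_y]; first by rewrite !lin0.
  by rewrite f_lin g_lin fg_x fg_y.
move=> u l fg_u ul; apply: (convergesR_unique (convergesR_nonexpansive f_ne ul)).
move=> e e_gt0; have [N hN] := convergesR_nonexpansive g_ne ul e_gt0.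
by exists N => n /hN; rewrite fg_u.
Qed.

Lemma closed_subspace_forall (I : Type) (M : I -> H -> Prop) :
  (forall i, closed_subspace (M i)) -> closed_subspace (fun x => forall i, M i x).
Proof.
move=> M_cs; split; first split=> [i|c x y Mx My i]; first by case: (M_cs i) => -[].
  by case: (M_cs i) => -[_ MD] _; apply: MD.
move=> u l Mu ul i; case: (M_cs i) => _ Mlim.
by apply: (Mlim u) => // n; exact: Mu.
Qed.

Lemma closed_subspace_impl (A : Prop) M :
  (A -> closed_subspace M) -> closed_subspace (fun x => A -> M x).
Proof.
move=> M_cs; split; first split=> [a|c x y Mx My a]; first by case: (M_cs a) => -[].
  by case: (M_cs a) => -[_ MD] _; apply: MD; [apply: Mx|apply: My].
move=> u l Mu ul a; case: (M_cs a) => _ Mlim.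
by apply: (Mlim u) => // n; exact: Mu n a.
Qed.

Lemma range_closed_subspace q : is_projection ip q -> closed_subspace (range q).
Proof.
move=> hq; have [[fix0 fixD] fix_lim] :=
  equalizer_closed_subspace (proj_nonexpansive hq) nonexpansive_id.
split; first split=> [|c x y]; rewrite ?proj_rangeE //; first by move=> /fixD; apply.
by move=> u l ru ul; apply/proj_rangeE/(fix_lim u) => // n; apply/proj_rangeE.
Qed.

Lemma minimizing_cauchy (v : nat -> H) (d2 : R) (h : nat -> R) :
  (forall m n, 4 * d2 <= sqnorm (v m + v n)) ->
  (forall n, sqnorm (v n) <= d2 + h n) ->
  (forall e, 0 < e -> exists N, forall n, (N <= n)%N -> h n < e) ->
  cauchyR v.
Proof.
move=> mid_ge v_le h_small e e_gt0.
have [|N hN] := h_small (e ^+ 2 / 4); first by rewrite divr_gt0 ?exprn_gt0.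
exists N => m n le_Nm le_Nn; rewrite rnorm_lt //.
have := parallelogram (v m) (v n); have := mid_ge m n.
have := v_le m; have := v_le n; have := hN m le_Nm; have := hN n le_Nn.
lra.
Qed.

Hypothesis hcomp : forall u, cauchy_seq ip u -> exists l, converges_to ip u l.

Lemma cauchyR_converges u : cauchyR u -> exists l, convergesR u l.
Proof.
move=> u_cauchy; have [|l ul] := hcomp (u := u).
  move=> e; case: e => a b; rewrite ltcE /= => /andP[/eqP -> a_gt0].
  have [N hN] := u_cauchy a a_gt0.
  by exists N => n m le_Nn le_Nm; rewrite hnormE ltcR hN.
exists l => e e_gt0; have [|N hN] := ul e%:C%C; first by rewrite ltcR.
by exists N => n le_Nn; rewrite -ltcR -hnormE hN.
Qed.

Section NearestPoint.
Variables (M : H -> Prop) (x : H) (d : R) (ms : nat -> H).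
Hypotheses (M_sub : subspace M) (d_ge0 : 0 <= d)
  (d_le : forall m, M m -> d <= rnorm (x - m)) (ms_in : forall n, M (ms n))
  (ms_near : forall n, rnorm (x - ms n) < d + n.+1%:R^-1).

Let v n := x - ms n.

Lemma nearest_seq_midpoint m n : 4 * d ^+ 2 <= sqnorm (v m + v n).
Proof.
pose mid := (2^-1 : R[i]) *: (ms m + ms n).
have mid_in : M mid by apply: subspaceZ => //; apply: subspaceD.
have mid2 : mid + mid = ms m + ms n.
  by rewrite -scalerDl -[2^-1]mul1r -splitr scale1r.
have -> : v m + v n = (x - mid) + (x - mid).
  by rewrite /v addrACA -opprD [RHS]addrACA -opprD mid2.
have := parallelogram (x - mid) (x - mid); rewrite subrr sqnorm0 addr0 => ->.
have := d_le mid_in; have := rnorm_ge0 (x - mid); have := d_ge0.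
by rewrite -rnorm_sqr; nra.
Qed.

Lemma nearest_seq_sqnorm n : sqnorm (v n) <= d ^+ 2 + (2 * d + 1) * n.+1%:R^-1.
Proof.
have h_gt0 : 0 < n.+1%:R^-1 :> R by rewrite invr_gt0 ltr0Sn.
have h_le1 : n.+1%:R^-1 <= 1 :> R.
  by rewrite invr_le1 ?ltr0Sn ?unitfE ?pnatr_eq0 // ler1n.
have := ms_near n; rewrite -rnorm_sqr -/(v n); have := rnorm_ge0 (v n).
move: h_gt0 h_le1 d_ge0; set h := n.+1%:R^-1; nra.
Qed.

Lemma nearest_seq_cauchy : cauchyR v.
Proof.
apply: (minimizing_cauchy nearest_seq_midpoint nearest_seq_sqnorm) => e e_gt0.
have d1_gt0 : 0 < 2 * d + 1 by have := d_ge0; lra.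
have [|N hN] := invSn_lt (e := e / (2 * d + 1)); first by rewrite divr_gt0.
by exists N => n /hN; rewrite ltr_pdivlMr // mulrC.
Qed.

Lemma nearest_seq_limit l : convergesR v l -> rnorm l <= d.
Proof.
move=> vl; apply/ler_addgt0Pr => e e_gt0.
have [|N1 hN1] := vl (e / 2); first by rewrite divr_gt0.
have [|N2 hN2] := invSn_lt (e := e / 2); first by rewrite divr_gt0.
have := hN1 _ (leq_maxl N1 N2); have := hN2 _ (leq_maxr N1 N2).
have := ms_near (maxn N1 N2); have := rnormD (v (maxn N1 N2)) (l - v (maxn N1 N2)).
rewrite addrC subrK (rnormB l) /v; set h := _.+1%:R^-1; lra.
Qed.

End NearestPoint.

Lemma exists_nearest M x : closed_subspace M ->
  exists2 m, M m & forall z, M z -> rnorm (x - m) <= rnorm (x - z).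
Proof.
move=> [M_sub M_closed].
pose dist r := exists2 m, M m & r = rnorm (x - m).
have dist_x : dist (rnorm (x - 0)) by exists 0 => //; case: M_sub.
have d_le m : M m -> inf dist <= rnorm (x - m).
  by move=> Mm; apply: ge_inf; [exists 0 => _ [? _ ->]; apply: rnorm_ge0 | exists m].
have d_ge0 : 0 <= inf dist.
  apply: lb_le_inf; first by exists (rnorm (x - 0)).
  by move=> _ [? _ ->]; apply: rnorm_ge0.
have /ClassicalEpsilon.choice[ms ms_spec] :
    forall n, exists m, M m /\ rnorm (x - m) < inf dist + n.+1%:R^-1.
  move=> n; have : inf dist < inf dist + n.+1%:R^-1 by rewrite ltrDl invr_gt0 ltr0Sn.
  by case/(inf_lt (ex_intro _ _ dist_x)) => _ [m Mm ->]; exists m.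
have ms_in n := (ms_spec n).1; have ms_near n := (ms_spec n).2.
have [l vl] := cauchyR_converges (nearest_seq_cauchy M_sub d_ge0 d_le ms_in ms_near).
exists (x - l) => [|z Mz].
  apply: (M_closed ms) => // e /vl[N hN]; exists N => n /hN.
  by rewrite -rnormB !opprB addrCA.
by rewrite subKr; apply: le_trans (nearest_seq_limit ms_near vl) (d_le z Mz).
Qed.

Lemma reip_eq0_of_min w z :
  (forall t : R, sqnorm w <= sqnorm (w + t%:C%C *: z)) -> reip w z = 0.
Proof.
move=> w_min; pose s := (sqnorm z + 1)^-1.
have z_ge0 := sqnorm_ge0 z.
have s_gt0 : 0 < s by rewrite invr_gt0; lra.
have s_z1 : s * (sqnorm z + 1) = 1 by rewrite mulVf //; lra.
have sz_lt2 : s * sqnorm z - 2 < 0 by lra.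
(* at [t = - reip w z * s] the increment [sqnorm (w + t z) - sqnorm w] is
   [reip w z ^ 2 * s * (s * sqnorm z - 2)], negative unless [reip w z = 0] *)
have := w_min (- reip w z * s); rewrite sqnormDZ; set r := reip w z => r_min.
have : 0 <= r ^+ 2 * s * (s * sqnorm z - 2) by lra.
rewrite nmulr_lge0 // pmulr_lle0 // => r2_le0.
by apply/eqP; rewrite -sqrf_eq0 eq_le r2_le0 sqr_ge0.
Qed.

Lemma reip_scale_i w z : reip w ('i *: z) = complex.Im (ip w z).
Proof. by rewrite /reip ipZr; case: (ip w z) => a b /=; lra. Qed.

Lemma nearest_orth M x m : subspace M -> M m ->
  (forall z, M z -> rnorm (x - m) <= rnorm (x - z)) ->
  forall z, M z -> ip (x - m) z = 0.
Proof.
move=> M_sub Mm m_near.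
have reip0 z : M z -> reip (x - m) z = 0.
  move=> Mz; apply: reip_eq0_of_min => t; rewrite -rnorm_le.
  have -> : x - m + t%:C%C *: z = x - ((- t)%:C%C *: z + m).
    by rewrite rmorphN scaleNr opprD opprK addrA addrAC.
  by apply/m_near/M_sub.2.
move=> z Mz; have := reip0 _ (subspaceZ 'i M_sub Mz); rewrite reip_scale_i.
by have := reip0 z Mz; rewrite /reip; case: (ip (x - m) z) => a b /= -> ->.
Qed.

Lemma orth_decomp_unique M x m1 m2 : subspace M -> M m1 -> M m2 ->
  (forall z, M z -> ip (x - m1) z = 0) -> (forall z, M z -> ip (x - m2) z = 0) ->
  m1 = m2.
Proof.
move=> M_sub Mm1 Mm2 orth1 orth2; apply/subr0_eq/ip_eq0.
have m12 : m1 - m2 = (x - m2) - (x - m1) by rewrite opprB [RHS]addrC subrKA.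
have M12 : M (m1 - m2) by apply: subspaceB.
by rewrite {1}m12 ipBl orth1 // orth2 // subrr.
Qed.

Section OrthogonalMap.
Variables (M : H -> Prop) (q : H -> H).
Hypotheses (M_sub : subspace M) (q_in : forall x, M (q x))
  (q_orth : forall x z, M z -> ip (x - q x) z = 0).

Lemma orth_map_id y : M y -> q y = y.
Proof.
move=> My; apply: (orth_decomp_unique M_sub (q_in y) My (q_orth y)) => z _.
by rewrite subrr ip0l.
Qed.

Lemma orth_map_linear : linear q.
Proof.
move=> c x y; apply: (orth_decomp_unique M_sub (q_in _) _ (q_orth _)).
  by apply: M_sub.2; apply: q_in.
move=> z Mz; have -> : c *: x + y - (c *: q x + q y) = c *: (x - q x) + (y - q y).
  by rewrite scalerBr opprD addrACA.
by rewrite ipDZl !q_orth // mulr0 addr0.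
Qed.

Lemma orth_map_selfadj x y : ip (q x) y = ip x (q y).
Proof.
have orth_q u w : ip (q u) (w - q w) = 0 by rewrite ipC q_orth ?conjC0.
rewrite -[y in LHS](subrK (q y)) -[x in RHS](subrK (q x)) ipDr ipDl.
by rewrite orth_q q_orth.
Qed.

Lemma orth_map_projection : is_projection ip q /\ forall y, M y <-> range q y.
Proof.
split; last by move=> y; split=> [My|[x <-] //]; exists y; rewrite orth_map_id.
split=> [|x y|x]; [split|exact: orth_map_selfadj|exact: orth_map_id].
  exact: orth_map_linear.
exists 1 => x; rewrite mul1r !hnormE lecR rnorm_le -{2}(addrNK (q x) x).
by rewrite pythagoras ?lerDr ?sqnorm_ge0 // /reip q_orth.
Qed.

End OrthogonalMap.

Lemma exists_orth_proj M : closed_subspace M ->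
  exists q, is_projection ip q /\ forall y, M y <-> range q y.
Proof.
move=> M_cs; have /ClassicalEpsilon.choice[q q_spec] :
    forall x, exists m, M m /\ forall z, M z -> ip (x - m) z = 0.
  move=> x; have [m Mm m_near] := exists_nearest x M_cs.
  by exists m; split=> //; apply: nearest_orth M_cs.1 Mm m_near.
by exists q; apply: (orth_map_projection M_cs.1) => x; case: (q_spec x).
Qed.

Section ProjOnto.
Variable M : H -> Prop.
Hypothesis M_cs : closed_subspace M.

Let proj_onto_spec :
  is_projection ip (proj_onto ip M) /\ forall y, M y <-> range (proj_onto ip M) y.
Proof. exact: epsilon_spec (inhabits id) _ (exists_orth_proj M_cs). Qed.

Lemma proj_onto_proj : is_projection ip (proj_onto ip M).
Proof. exact: proj_onto_spec.1. Qed.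

Lemma proj_onto_in x : M (proj_onto ip M x).
Proof. by apply/proj_onto_spec.2; exists x. Qed.

Lemma proj_onto_id y : M y -> proj_onto ip M y = y.
Proof. by move=> /proj_onto_spec.2[x <-]; exact: (proj_idem proj_onto_proj). Qed.

Lemma proj_onto_orth x z : M z -> ip (x - proj_onto ip M x) z = 0.
Proof.
have P_proj := proj_onto_proj.
move=> Mz; rewrite -(proj_onto_id Mz) -(proj_selfadj P_proj).
by rewrite (linB (proj_linear P_proj)) (proj_idem P_proj) subrr ip0l.
Qed.

Lemma proj_onto_unique x m :
  M m -> (forall z, M z -> ip (x - m) z = 0) -> proj_onto ip M x = m.
Proof.
move=> Mm m_orth.
exact: orth_decomp_unique M_cs.1 (proj_onto_in x) Mm (@proj_onto_orth x) m_orth.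
Qed.

End ProjOnto.

Lemma orth_invariant M P psi : is_projection ip P -> (forall y, M y -> M (P y)) ->
  orth ip M psi -> orth ip M (P psi).
Proof.
by move=> hP P_inv psi_orth y My; rewrite (proj_selfadj hP); apply/psi_orth/P_inv.
Qed.

Lemma proj_onto_commute M P x : closed_subspace M -> is_projection ip P ->
  (forall y, M y -> M (P y)) -> P (proj_onto ip M x) = proj_onto ip M (P x).
Proof.
move=> M_cs hP P_inv; symmetry; apply: (proj_onto_unique M_cs).
  exact/P_inv/(proj_onto_in M_cs).
move=> z Mz; rewrite -(linB (proj_linear hP)) (proj_selfadj hP).
exact/(proj_onto_orth M_cs)/P_inv.
Qed.

Lemma proj_onto_restrict M N : closed_subspace N ->
  (forall y, M y -> M (proj_onto ip N y)) ->
  proj_in ip M (fun y => N y /\ M y) (proj_onto ip N).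
Proof.
move=> N_cs N_inv; have P_proj := proj_onto_proj N_cs.
split=> [//|x y _ _|x _|y]; [exact: proj_selfadj|exact: proj_idem|].
split=> [[Ny My]|[x [Mx <-]]]; first by exists y; rewrite proj_onto_id.
by split; [exact: proj_onto_in|exact: N_inv].
Qed.

Lemma eq_has_sum (I : countType) (f g : I -> H) x :
  f =1 g -> has_sum ip f x -> has_sum ip g x.
Proof.
move=> fg fx e /fx[s0 hs0]; exists s0 => s s_uniq s0s.
by rewrite -(eq_bigr _ (fun a _ => fg a)); apply: hs0.
Qed.

Lemma prodop_cat (ws vs : list (H -> H)) x :
  prodop (ws ++ vs) x = prodop ws (prodop vs x).
Proof. by elim: ws => //= w ws ->. Qed.

Section Family.
Variables (S : Type) (Gamma : S -> countType) (p : forall t, Gamma t -> H -> H).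
Hypothesis p_proj : forall t (a : Gamma t), is_projection ip (p a).

Lemma in_pi_proj w : in_pi p w -> is_projection ip w.
Proof. by case=> t [a ->]. Qed.

Lemma ops_in_pi ts w : In w (ops p ts) -> in_pi p w.
Proof. by case/in_map_iff => x [<- _]; exists (projT1 x), (projT2 x). Qed.

Lemma Hpi_apply w phi : in_pi p w -> Hpi p phi -> Hpi p (w phi).
Proof.
move=> w_pi phi_pi ws vs ws_pi ws_vs.
rewrite -[w phi]/(prodop [:: w] phi) -!prodop_cat.
apply: phi_pi; last exact: Permutation_app_tail.
by move=> v /(in_app_or ws) [/ws_pi //|[<- //|[]]].
Qed.

Lemma Hpi_prodop ws phi : (forall w, In w ws -> in_pi p w) -> Hpi p phi ->
  Hpi p (prodop ws phi).
Proof.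
elim: ws => [//|w ws IH] ws_pi phi_pi /=; apply: Hpi_apply.
  exact: ws_pi (or_introl erefl).
by apply: IH => // v v_in; apply: ws_pi (or_intror v_in).
Qed.

Lemma Hpi_closed_subspace : closed_subspace (Hpi p).
Proof.
rewrite /Hpi /commutes_on.
apply: closed_subspace_forall => ws; apply: closed_subspace_forall => vs.
apply: closed_subspace_impl => ws_pi; apply: closed_subspace_impl => ws_vs.
apply: equalizer_closed_subspace; apply: prodop_nonexpansive => w w_in.
  exact/in_pi_proj/ws_pi.
exact/in_pi_proj/ws_pi/(Permutation_in _ (Permutation_sym ws_vs)).
Qed.

Lemma Hmeet_closed_subspace ts : closed_subspace (Hmeet p ts).
Proof.
apply: closed_subspace_forall => q; apply: closed_subspace_impl => /ops_in_pi q_pi.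
exact/range_closed_subspace/in_pi_proj.
Qed.

Lemma ip_prodop_fixed ws v z :
  (forall q, In q ws -> is_projection ip q /\ q z = z) ->
  ip (prodop ws v) z = ip v z.
Proof.
elim: ws v => [//|w ws IH] v ws_fix /=.
have [w_proj wz] := ws_fix w (or_introl erefl).
by rewrite (proj_selfadj w_proj) wz IH // => q q_in; apply: ws_fix; right.
Qed.

Lemma pmeet_prodop ts phi : Hpi p phi -> pmeet ip p ts phi = prodop (ops p ts) phi.
Proof.
move=> phi_pi; apply: proj_onto_unique; first exact: Hmeet_closed_subspace.
  move=> q /[dup] /(in_split q)[l1 [l2 ops_split]] q_in.
  exists (prodop (l1 ++ l2) phi).
  rewrite (phi_pi _ (q :: l1 ++ l2) (@ops_in_pi ts)) // ops_split.
  exact/Permutation_sym/Permutation_middle.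
move=> z z_meet; rewrite ipBl ip_prodop_fixed ?subrr // => q q_in.
have q_proj := in_pi_proj (ops_in_pi q_in).
by split; last exact/(proj_rangeE q_proj)/z_meet.
Qed.

Lemma Hpi_pmeet ts phi : Hpi p phi -> Hpi p (pmeet ip p ts phi).
Proof.
by move=> phi_pi; rewrite pmeet_prodop //; apply: Hpi_prodop => // w /ops_in_pi.
Qed.

Lemma pmeet_insert l r t (b : Gamma t) phi : Hpi p phi ->
  pmeet ip p (l ++ existT _ t b :: r) phi = p b (pmeet ip p (l ++ r) phi).
Proof.
move=> phi_pi; rewrite !pmeet_prodop //.
apply: (phi_pi _ (p b :: ops p (l ++ r)) (@ops_in_pi _)).
by rewrite /ops !map_cat /=; apply/Permutation_sym/Permutation_middle.
Qed.

End Family.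

End InnerProduct.

Unset Implicit Arguments.
Set Strict Implicit.

Theorem proposition2 (R : realType) (H : lmodType R[i]) (ip : H -> H -> R[i])
  (S : Type) (Gamma : S -> countType) (p : forall t, Gamma t -> H -> H)
  (hH : is_hilbert ip)
  (hproj : forall t (a : Gamma t), is_projection ip (p t a))
  (hsum : forall t (x : H), has_sum ip (fun a : Gamma t => p t a x) x)
  (ts : list {t : S & Gamma t}) (hk : (0 < size ts)%N) :
  let P := pmeet ip p ts in
  let Hp := Hpi p in
  let pp := ppi ip p in
  [/\ (forall phi, Hp phi -> Hp (P phi)) /\
        (forall psi, orth ip Hp psi -> orth ip Hp (P psi)),
      forall x, P (pp x) = pp (P x),
      proj_in ip Hp (fun y => Hmeet p ts y /\ Hp y) P,
      forall phi, Hp phi -> P phi = prodop (ops p ts) phi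
    & forall (l r : list {t : S & Gamma t}) (t : S) (a : Gamma t),
        ts = l ++ existT _ t a :: r ->
        forall phi, Hp phi ->
          has_sum ip (fun b : Gamma t => pmeet ip p (l ++ existT _ t b :: r) phi)
                     (pmeet ip p (l ++ r) phi)].
Proof.
move=> P Hp pp; have [hip hcomp] := hH.
have Hp_cs : closed_subspace ip Hp by apply: Hpi_closed_subspace.
have meet_cs : closed_subspace ip (Hmeet p ts) by apply: Hmeet_closed_subspace.
have P_proj : is_projection ip P by apply: proj_onto_proj.
have P_inv phi : Hp phi -> Hp (P phi) by apply: Hpi_pmeet.
split.
- by split=> // psi; apply: orth_invariant.
- by move=> x; apply: proj_onto_commute.
- exact: proj_onto_restrict.
- exact: pmeet_prodop.
- move=> l r t a _ phi phi_pi; apply: eq_has_sum (hsum t _) => b.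
  by rewrite pmeet_insert.
Qed.
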